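(* Let $R$ be a Krull domain. If $R$ has the Z-property, then the divisor class group $Cl(R)$ is a torsion group.
   Context: For $a,b\in R$, $[a,b]\neq1$ means $a,b$ have a common nonunit divisor, and $[a,b]=1$ means they do not. $R$ has the Z-property if whenever $a,b,c,d,e$ are nonzero nonunits of $R$ with $abc=de$, then $[ab,d]\neq 1$ or $[ab,e]\neq 1$. *)

From Stdlib Require Lists.List.
From HB Require Import structures.
From mathcomp Require Import all_boot all_order all_algebra.
From mathcomp Require Export fraction.
Set Implicit Arguments. Unset Strict Implicit. Unset Printing Implicit Defensive.
Import Order.TTheory GRing.Theory Num.Theory.
Local Open Scope ring_scope.

Section Defs.
Variable R : idomainType.
Local Notation K := {fraction R}.
Local Notation "x %:F" := (@FracField.tofrac R x).

Definition inR (x : K) : Prop := exists r : R, x = r%:F.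

Definition rdvd (a b : R) : Prop := exists c : R, b = c * a.
Definition nonzero_nonunit (a : R) : Prop := a != 0 /\ a \isn't a GRing.unit.
Definition common_nonunit_divisor (a b : R) : Prop :=
  exists c : R, c \isn't a GRing.unit /\ rdvd c a /\ rdvd c b.

Definition Z_property : Prop :=
  forall a b c d e : R,
    nonzero_nonunit a -> nonzero_nonunit b -> nonzero_nonunit c ->
    nonzero_nonunit d -> nonzero_nonunit e ->
    a * b * c = d * e ->
    common_nonunit_divisor (a * b) d \/ common_nonunit_divisor (a * b) e.

(* discrete (rank one, normalized) valuations of the fraction field *)
Record dvaluation := DVal {
  dv :> K -> int;
  dv_mul : forall x y, x != 0 -> y != 0 -> dv (x * y) = dv x + dv y;
  dv_add : forall x y, x != 0 -> y != 0 -> x + y != 0 ->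
             Num.min (dv x) (dv y) <= dv (x + y);
  dv_surj : forall n : int, exists x, x != 0 /\ dv x = n
}.

Definition in_vring (v : dvaluation) (x : K) : Prop := x = 0 \/ 0 <= v x.

(* Krull domain: R is the intersection of a defining family of DVRs of its
   fraction field, of finite character. *)
Definition Krull_domain : Prop :=
  exists (I : Type) (v : I -> dvaluation),
    (forall x : K, inR x <-> forall i, in_vring (v i) x) /\
    (forall x : K, x != 0 ->
       exists l : seq I, forall i, v i x != 0 -> Stdlib.Lists.List.In i l).

Definition finv (S : K -> Prop) : K -> Prop :=
  fun y => forall s, S s -> inR (y * s).
Definition vclos (S : K -> Prop) : K -> Prop := finv (finv S).

Definition fractional_ideal (F : K -> Prop) : Prop :=
  F 0 /\ (forall x y, F x -> F y -> F (x + y)) /\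
  (forall (r : R) x, F x -> F (r%:F * x)) /\
  (exists x, F x /\ x != 0) /\
  (exists d : R, d != 0 /\ forall x, F x -> inR (d%:F * x)).

Definition divisorial (F : K -> Prop) : Prop :=
  fractional_ideal F /\ forall x, F x <-> vclos F x.

(* set of products of n elements of F; its v-closure is (F^n)_v *)
Definition setpow (F : K -> Prop) (n : nat) : K -> Prop :=
  fun y => exists f : 'I_n -> K, (forall i, F (f i)) /\ y = \prod_i f i.

Definition principal_frac (x : K) : K -> Prop :=
  fun y => exists r : R, y = r%:F * x.

(* Cl(R) = divisorial fractional ideals (under v-multiplication) modulo
   principal ones; it is torsion iff every class has finite order. *)
Definition class_group_torsion : Prop :=
  forall F : K -> Prop, divisorial F ->
    exists n : nat, (0 < n)%N /\
      exists x : K, x != 0 /\ forall y, vclos (setpow F n) y <-> principal_frac x y.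

End Defs.

(* The defining family of valuations may be redundant, but its essential members, those
   whose center in R is a conductor ideal (R :_R t), still cut out R, and two of them with
   the same center coincide.  Hence if every essential center is torsion as a divisor, every
   fractional ideal F has a principal v-closure (F^n)_v.

   Suppose the center of an essential valuation p is not torsion.  Take w0 in it and the
   finitely many essential valuations t_0 = p, ..., t_(n-1) at which w0 is not a unit.  The
   valuation vectors of the elements supported on them form a lattice meeting the t_0-axis
   only in 0, so a rational linear form psi with psi_0 <> 0 vanishes on it.  Among the
   elements of R supported there that agree with w0 where psi <> 0, let w have least total
   valuation: a divisor of w that is a unit wherever psi <> 0 is then a unit.  As
   sum_j psi_j v_j(w) = 0, psi takes both signs where w is not a unit.  Approximation gives
   d in R, highly divisible where psi > 0, a unit where psi < 0 and with v(d) = v(w) where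
   psi = 0, and e likewise for -psi.  Then c = d e / w^2 lies in R and w w c = d e with all
   five factors nonunits, while every common divisor of w^2 and d (or e) is a unit: this
   contradicts the Z-property. *)

From mathcomp Require Import all_boot all_order all_algebra generic_quotient zify ring.
From Stdlib Require Import ClassicalEpsilon.
Set Implicit Arguments. Unset Strict Implicit. Unset Printing Implicit Defensive.
Import Order.TTheory GRing.Theory Num.Theory.
Local Open Scope ring_scope.

Lemma classic_ex_minn (P : nat -> Prop) : (exists n, P n) ->
  exists n, P n /\ forall m, P m -> (n <= m)%N.
Proof.
move=> exP; pose p n : bool := excluded_middle_informative (P n).
have pP n : reflect (P n) (p n) by rewrite /p; case: excluded_middle_informative; constructor.
have [n /pP Pn minn] := ex_minnP (let: ex_intro n Pn := exP in ex_intro p n (introT (pP n) Pn)).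
by exists n; split=> // m /pP; apply: minn.
Qed.

Local Open Scope quotient_scope.
Lemma fraction_repr (R : idomainType) (x : {fraction R}) :
  exists a b : R, b != 0 /\ x = (FracField.tofrac a) / (FracField.tofrac b).
Proof.
elim/quotW: x => r; exists r.1, r.2; have r20 := denom_ratioP r; split=> //.
suff <- : \pi_({fraction R}) r * FracField.tofrac r.2 = FracField.tofrac r.1.
  by rewrite mulfK // tofrac_eq0.
unlock FracField.tofrac; rewrite [_ * _]piE; apply/eqmodP.
rewrite /= FracField.equivfE /FracField.mulf /=.
by rewrite !numden_Ratio ?mulf_neq0 ?oner_eq0 // !mulr1 mulrC.
Qed.
Local Close Scope quotient_scope.

Lemma extend_eliminated_form (T : eqType) (cs : seq T) q (a b : T -> int) (psi : T -> rat) :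
  uniq cs -> q \in cs -> a q != 0 ->
  \sum_(j <- rem q cs) psi j * (a q * b j - b q * a j)%:~R = 0 ->
  let S := \sum_(j <- rem q cs) psi j * (a j)%:~R in
  \sum_(j <- cs) (if j == q then - S / (a q)%:~R else psi j) * (b j)%:~R = 0.
Proof.
move=> cs_uniq q_cs aq0 elim0 S.
rewrite (perm_big _ (perm_to_rem q_cs)) big_cons eqxx.
have -> : \sum_(j <- rem q cs) (if j == q then - S / (a q)%:~R else psi j) * (b j)%:~R =
    \sum_(j <- rem q cs) psi j * (b j)%:~R.
  by apply: eq_big_seq => j; rewrite mem_rem_uniq // => /andP[/negbTE -> _].
have aq0' : (a q)%:~R != 0 :> rat by rewrite intr_eq0.
move: elim0; rewrite (eq_bigr (fun j =>
  (a q)%:~R * (psi j * (b j)%:~R) - (b q)%:~R * (psi j * (a j)%:~R))); last first.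
  by move=> j _; rewrite intrB !intrM; ring.
rewrite sumrB -!mulr_sumr -/S => /eqP; rewrite subr_eq0 => /eqP E.
by apply: (mulfI aq0'); rewrite mulr0 mulrDr E; field.
Qed.

Lemma exists_annihilating_form (T : eqType) (cs : seq T) j0 (L : (T -> int) -> Prop) :
  uniq cs -> j0 \in cs ->
  (forall u u', L u -> L u' -> L (fun j => u j - u' j)) ->
  (forall u (z : int), L u -> L (fun j => z * u j)) ->
  (forall u, L u -> (forall j, j \in cs -> j != j0 -> u j = 0) -> u j0 = 0) ->
  exists psi : T -> rat, psi j0 != 0 /\
    forall u, L u -> \sum_(j <- cs) psi j * (u j)%:~R = 0.
Proof.
move: {2}(size cs) (leqnn (size cs)) => n.
elim: n cs L => [|n IH] cs L; first by rewrite leqn0 => /nilP ->.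
move=> size_cs uniq_cs j0_cs LB LZ L_j0.
have [[l [q [Ll q_cs qj0 lq0]]]|] :=
  classic (exists l q, [/\ L l, q \in cs, q != j0 & l q != 0]); last first.
  move=> only_j0; exists (fun j => (j == j0)%:R); split => [|u Lu].
    by rewrite eqxx oner_neq0.
  apply: big1 => j _; have [->|] := eqVneq j j0; last by rewrite mul0r.
  rewrite (L_j0 u) ?mulr0 // => j' j'_cs j'j0; apply: NNPP => uj'0.
  by apply: only_j0; exists u, j'; split => //; apply/eqP.
(* Eliminate the coordinate [q], on which [L] does not vanish, and recurse. *)
pose cs' := rem q cs.
have mem_cs' j : (j \in cs') = (j != q) && (j \in cs) by rewrite mem_rem_uniq.
pose elim_q m j := l q * m j - m q * l j.
pose L' u := exists2 m, L m & forall j, u j = elim_q m j.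
have [psi' [psi'j0 psi'L']] : exists psi' : T -> rat, psi' j0 != 0 /\
    forall u, L' u -> \sum_(j <- cs') psi' j * (u j)%:~R = 0.
  apply: IH.
  - by rewrite size_rem //; move: size_cs; case: (size cs).
  - exact: rem_uniq.
  - by rewrite mem_cs' eq_sym qj0.
  - move=> u u' [m Lm Em] [m' Lm' Em']; exists (fun j => m j - m' j); first exact: LB.
    by move=> j; rewrite Em Em' /elim_q; ring.
  - move=> u z [m Lm Em]; exists (fun j => z * m j); first exact: LZ.
    by move=> j; rewrite Em /elim_q; ring.
  - move=> u [m Lm Em] vanish; rewrite Em.
    apply: (L_j0 _ (LB _ _ (LZ _ _ Lm) (LZ _ _ Ll))) => j j_cs jj0.
    have [->|jq] := eqVneq j q; first by rewrite /elim_q; ring.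
    by have := vanish j; rewrite mem_cs' jq j_cs Em; apply.
exists (fun j => if j == q then - (\sum_(i <- cs') psi' i * (l i)%:~R) / (l q)%:~R else psi' j).
split=> [|m Lm]; first by rewrite ifN_eqC.
by apply: extend_eliminated_form => //; apply: psi'L'; exists m.
Qed.

Lemma sum_eq0_signs (T : eqType) (s : seq T) (psi : T -> rat) (a : T -> int) j0 :
  j0 \in s -> (forall j, j \in s -> 0 <= a j) -> psi j0 != 0 -> 0 < a j0 ->
  \sum_(j <- s) psi j * (a j)%:~R = 0 ->
  (exists2 j, j \in s & 0 < psi j /\ 0 < a j) /\ (exists2 j, j \in s & psi j < 0 /\ 0 < a j).
Proof.
move=> j0s a_ge0 psi0 aj0 sum0.
have neg_term (b : T -> rat) : \sum_(j <- s) b j = 0 -> b j0 != 0 -> exists2 j, j \in s & b j < 0.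
  move=> bsum0 bj0; apply: NNPP => no_neg; move/eqP: bsum0; rewrite big_seq psumr_eq0.
    by move/allP/(_ j0 j0s); rewrite j0s (negbTE bj0).
  by move=> j js; rewrite leNgt; apply/negP => bj; apply: no_neg; exists j.
have term_sign j : j \in s ->
    (psi j * (a j)%:~R < 0 -> psi j < 0 /\ 0 < a j) /\
    (0 < psi j * (a j)%:~R -> 0 < psi j /\ 0 < a j).
  move=> js; have := a_ge0 j js; rewrite le_eqVlt => /orP[/eqP <-|aj].
    by rewrite mulr0z mulr0 ltxx.
  by rewrite pmulr_llt0 ?pmulr_lgt0 ?ltr0z.
have b0 : psi j0 * (a j0)%:~R != 0 by rewrite mulf_neq0 // intr_eq0 gt_eqF.
split; last first.
  by have [j js /(term_sign j js).1] := neg_term _ sum0 b0; exists j.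
have [||j js] := neg_term (fun j => - (psi j * (a j)%:~R)); rewrite ?oppr_eq0 //.
  by rewrite sumrN sum0 oppr0.
by rewrite oppr_lt0 => /(term_sign j js).2; exists j.
Qed.

Lemma ltn_sum_seq (T : eqType) (s : seq T) (f g : T -> nat) j :
  uniq s -> j \in s -> (forall i, i \in s -> (f i <= g i)%N) -> (f j < g j)%N ->
  (\sum_(i <- s) f i < \sum_(i <- s) g i)%N.
Proof.
move=> s_uniq js le_fg lt_fg; rewrite !(bigD1_seq j) //= -addSn leq_add //.
by rewrite big_seq_cond [X in (_ <= X)%N]big_seq_cond; apply: leq_sum => i /andP[/le_fg].
Qed.

Lemma ler_term_sum (R : numDomainType) (T : eqType) (s : seq T) (P : pred T) (F : T -> R) j :
  uniq s -> j \in s -> P j -> (forall i, i \in s -> P i -> 0 <= F i) ->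
  F j <= \sum_(i <- s | P i) F i.
Proof.
move=> s_uniq js Pj F_ge0; rewrite big_mkcond (bigD1_seq j) //= Pj lerDl.
by rewrite big_seq_cond; apply: sumr_ge0 => i /andP[i_s _]; case: ifP => // /(F_ge0 i i_s).
Qed.

Lemma eq_of_sum_le (T : Type) (l : seq T) (f g : T -> nat) :
  (forall i, (f i <= g i)%N) -> (\sum_(i <- l) g i <= \sum_(i <- l) f i)%N ->
  forall i, List.In i l -> f i = g i.
Proof.
move=> le_fg; elim: l => [|a l IH] //; rewrite !big_cons => le_sum i [<-|il].
  have : (\sum_(j <- l) f j <= \sum_(j <- l) g j)%N by apply: leq_sum.
  by have := le_fg a; lia.
by apply: IH il; have := le_fg a; lia.
Qed.

Lemma leq_sum_In (T : Type) (l : seq T) (f : T -> nat) m :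
  List.In m l -> (f m <= \sum_(i <- l) f i)%N.
Proof.
elim: l => [|a l IH] //= [<-|ml]; rewrite big_cons; first exact: leq_addr.
exact: leq_trans (IH ml) (leq_addl _ _).
Qed.


(** * Discrete valuations *)

Section Valuation.
Variable R : idomainType.
Local Notation K := {fraction R}.
Variable w : dvaluation R.

Lemma dvM (x y : K) : x != 0 -> y != 0 -> w (x * y) = w x + w y.
Proof. exact: dv_mul. Qed.

Lemma dv1 : w 1 = 0.
Proof. by have := @dvM 1 1 (oner_neq0 _) (oner_neq0 _); rewrite mulr1; lia. Qed.

Lemma dvV (x : K) : x != 0 -> w x^-1 = - w x.
Proof. by move=> x0; apply/eqP; rewrite -addr_eq0 addrC -dvM ?invr_neq0 // mulfV // dv1. Qed.

Lemma dv_div (x y : K) : x != 0 -> y != 0 -> w (x / y) = w x - w y.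
Proof. by move=> x0 y0; rewrite dvM ?invr_neq0 // dvV. Qed.

Lemma dvX (x : K) n : x != 0 -> w (x ^+ n) = n%:Z * w x.
Proof.
move=> x0; elim: n => [|n IH]; first by rewrite expr0 dv1 mul0r.
by rewrite exprS dvM ?expf_neq0 // IH -add1n PoszD mulrDl mul1r.
Qed.

Lemma dvXz (x : K) (z : int) : x != 0 -> w (x ^ z) = z * w x.
Proof.
move=> x0; case: z => n; first by rewrite -exprnP dvX.
by rewrite NegzE -exprnN dvV ?expf_neq0 // dvX // mulNr.
Qed.

Lemma dvN (x : K) : x != 0 -> w (- x) = w x.
Proof.
have N10 : (-1 : K) != 0 by rewrite oppr_eq0 oner_neq0.
have w_N1 : w (-1) = 0.
  by have := dvM N10 N10; rewrite mulrNN mulr1 dv1; lia.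
by move=> x0; rewrite -mulN1r dvM // w_N1 add0r.
Qed.

Lemma dvD_lt (x y : K) : x != 0 -> y != 0 -> w x < w y ->
  x + y != 0 /\ w (x + y) = w x.
Proof.
move=> x0 y0 lt_xy.
have xy0 : x + y != 0.
  by apply: contraTneq lt_xy => /eqP; rewrite addr_eq0 => /eqP ->; rewrite dvN // ltxx.
have ny0 : - y != 0 by rewrite oppr_eq0.
have := dv_add w xy0 ny0; rewrite addrK dvN // => /(_ x0) le_x.
split=> //; apply/eqP; rewrite eq_le; apply/andP; split.
  move: le_x; rewrite ge_min => /orP[// | le_yx].
  by have := lt_le_trans lt_xy le_yx; rewrite ltxx.
move: (dv_add w x0 y0 xy0); rewrite ge_min => /orP[// | le_y].
exact: ltW (lt_le_trans lt_xy le_y).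
Qed.

Lemma dv_sum_gt (T : Type) (r : seq T) (P : pred T) (F : T -> K) t :
  (forall k, P k -> F k != 0 -> t < w (F k)) ->
  \sum_(k <- r | P k) F k != 0 -> t < w (\sum_(k <- r | P k) F k).
Proof.
move=> gtF; apply/implyP.
apply: (big_ind (fun x => (x != 0) ==> (t < w x))) => [|x y|k Pk]; first by rewrite eqxx.
  move=> /implyP gt_x /implyP gt_y; apply/implyP => xy0.
  have [x0|x0] := eqVneq x 0; first by rewrite x0 add0r in xy0 *; exact: gt_y.
  have [y0|y0] := eqVneq y 0; first by rewrite y0 addr0 in xy0 *; exact: gt_x.
  by apply: lt_le_trans (dv_add w x0 y0 xy0); rewrite lt_min gt_x ?gt_y.
by apply/implyP; apply: gtF.
Qed.

Lemma dv_sum_ge (T : Type) (r : seq T) (P : pred T) (F : T -> K) t :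
  (forall k, P k -> F k != 0 -> t <= w (F k)) ->
  \sum_(k <- r | P k) F k != 0 -> t <= w (\sum_(k <- r | P k) F k).
Proof.
move=> geF S0; suff : t - 1 < w (\sum_(k <- r | P k) F k) by lia.
by apply: dv_sum_gt => // k Pk Fk0; have := geF k Pk Fk0; lia.
Qed.

Lemma dv_sum_dominant (T : eqType) (r : seq T) (F : T -> K) i0 :
  uniq r -> i0 \in r -> F i0 != 0 ->
  (forall j, j \in r -> j != i0 -> F j != 0 -> w (F i0) < w (F j)) ->
  \sum_(j <- r) F j != 0 /\ w (\sum_(j <- r) F j) = w (F i0).
Proof.
move=> ur i0r Fi00 dom; rewrite (bigD1_seq i0) //= big_seq_cond.
have [->|S0] := eqVneq (\sum_(j <- r | (j \in r) && (j != i0)) F j) 0.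
  by rewrite addr0.
by apply: dvD_lt => //; apply: dv_sum_gt => // j /andP[jr ji0]; apply: dom.
Qed.

Lemma dv_prod (T : Type) (r : seq T) (P : pred T) (F : T -> K) :
  \prod_(j <- r | P j) F j != 0 ->
  w (\prod_(j <- r | P j) F j) = \sum_(j <- r | P j) w (F j).
Proof.
elim: r => [|x r IH]; first by rewrite !big_nil dv1.
rewrite !big_cons; case: (P x) => //.
by rewrite mulf_eq0 negb_or => /andP[Fx0 P0]; rewrite dvM // IH.
Qed.

Lemma dv1D_gt0 (x : K) : x != 0 -> 0 < w x -> 1 + x != 0 /\ w (1 + x) = 0.
Proof. by move=> x0 wx_gt0; rewrite -dv1; apply: dvD_lt; rewrite ?oner_neq0 ?dv1. Qed.

Lemma dv1D_lt0 (x : K) : x != 0 -> w x < 0 -> 1 + x != 0 /\ w (1 + x) = w x.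
Proof. by move=> x0 wx_lt0; rewrite addrC; apply: dvD_lt; rewrite ?oner_neq0 ?dv1. Qed.

End Valuation.

Lemma dv_eq_of_ring (R : idomainType) (w w' : dvaluation R) :
  (forall y, y != 0 -> (0 <= w y) = (0 <= w' y)) -> forall y, y != 0 -> w y = w' y.
Proof.
move=> same_ring.
have unit_eq0 z : z != 0 -> w z = 0 -> w' z = 0.
  move=> z0 wz0; have := same_ring _ (invr_neq0 z0); have := same_ring _ z0.
  by rewrite !dvV // wz0 oppr0 lexx; lia.
have [p [p0 wp]] := dv_surj w 1; have [q [q0 w'q]] := dv_surj w' 1.
have w'_lin y : y != 0 -> w' y = w y * w' p.
  move=> y0; have z0 : y * p ^ (- w y) != 0 by rewrite mulf_neq0 ?expfz_neq0.
  have := unit_eq0 _ z0; rewrite !dvM ?expfz_neq0 // !dvXz // wp; lia.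
have w'p_ge0 : 0 <= w' p by rewrite -same_ring // wp.
have w'p1 : w' p = 1.
  have := w'_lin q q0; rewrite w'q => /esym/intUnitRing.unitzPl.
  by rewrite qualifE /= => /orP[/eqP // | /eqP w'pN1]; move: w'p_ge0; rewrite w'pN1.
by move=> y y0; rewrite w'_lin // w'p1 mulr1.
Qed.


(** * Essential valuations of a Krull domain *)

Section IntegralElements.
Variable R : idomainType.
Local Notation K := {fraction R}.
Local Notation "x %:F" := (@FracField.tofrac R x).
Local Notation inR := (@inR R).

Lemma inR_tofrac (r : R) : inR r%:F. Proof. by exists r. Qed.
Lemma inR0 : inR 0. Proof. by exists 0; rewrite tofrac0. Qed.
Lemma inR1 : inR 1. Proof. by exists 1; rewrite tofrac1. Qed.
Lemma inRD x y : inR x -> inR y -> inR (x + y).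
Proof. by case=> a -> [b ->]; exists (a + b); rewrite tofracD. Qed.
Lemma inRM x y : inR x -> inR y -> inR (x * y).
Proof. by case=> a -> [b ->]; exists (a * b); rewrite tofracM. Qed.
Lemma inRX x n : inR x -> inR (x ^+ n).
Proof. by case=> a ->; exists (a ^+ n); rewrite tofracXn. Qed.

Lemma inR_sum (T : Type) (r : seq T) (P : pred T) (F : T -> K) :
  (forall j, P j -> inR (F j)) -> inR (\sum_(j <- r | P j) F j).
Proof. by move=> FR; apply: big_ind; [exact: inR0 | exact: inRD |]. Qed.

Lemma inR_prod (T : Type) (r : seq T) (P : pred T) (F : T -> K) :
  (forall j, P j -> inR (F j)) -> inR (\prod_(j <- r | P j) F j).
Proof. by move=> FR; apply: big_ind; [exact: inR1 | exact: inRM |]. Qed.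

Lemma unit_of_inR_inv (r : R) : r != 0 -> inR (r%:F)^-1 -> r \is a GRing.unit.
Proof.
move=> r0 [s rVs]; apply/unitrP; exists s; suff sr1 : s * r = 1 by split; last rewrite mulrC.
by apply/eqP; rewrite -tofrac_eq tofracM -rVs tofrac1 mulVf // tofrac_eq0.
Qed.

End IntegralElements.

Section KrullDomain.
Variable R : idomainType.
Local Notation K := {fraction R}.
Local Notation "x %:F" := (@FracField.tofrac R x).
Local Notation inR := (@inR R).
Variables (I : Type) (v : I -> dvaluation R).
Hypothesis inR_iff : forall x : K, inR x <-> forall i, in_vring (v i) x.
Hypothesis finite_character :
  forall x : K, x != 0 -> exists l : seq I, forall i, v i x != 0 -> List.In i l.

Lemma dv_ge0 x i : inR x -> x != 0 -> 0 <= v i x.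
Proof. by move=> /inR_iff/(_ i) [->|//]; rewrite eqxx. Qed.

Lemma inR_of_dv_ge0 x : (x != 0 -> forall i, 0 <= v i x) -> inR x.
Proof.
move=> ge0; apply/inR_iff => i; have [->|x0] := eqVneq x 0; first by left.
by right; apply: ge0.
Qed.

Definition center k (x : K) := inR x /\ (x != 0 -> 1 <= v k x).
Definition same_center k m := forall x, center k x <-> center m x.
Definition conductor (t x : K) := inR x /\ inR (x * t).
Definition essential k := exists t, ~ inR t /\ forall x, center k x <-> conductor t x.
Definition prime_pred (Q : K -> Prop) :=
  forall a b, inR a -> inR b -> Q (a * b) -> Q a \/ Q b.

Lemma center0 k : center k 0. Proof. by split; [exact: inR0 | rewrite eqxx]. Qed.
Lemma center1 k : ~ center k 1. Proof. by case=> _ /(_ (oner_neq0 _)); rewrite dv1. Qed.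

Lemma centerM k x y : center k x -> inR y -> center k (x * y).
Proof.
case=> xR x_ge1 yR; split; first exact: inRM.
rewrite mulf_eq0 negb_or => /andP[x0 y0]; rewrite dvM //.
by have := x_ge1 x0; have := dv_ge0 k yR y0; lia.
Qed.

Lemma center_prime k : prime_pred (center k).
Proof.
move=> a b aR bR [_ ab_ge1].
have [->|a0] := eqVneq a 0; first by left; exact: center0.
have [->|b0] := eqVneq b 0; first by right; exact: center0.
have := ab_ge1 (mulf_neq0 a0 b0); rewrite dvM // => ab_ge1'.
have := dv_ge0 k aR a0; have := dv_ge0 k bR b0 => b_ge0 a_ge0.
by case: (lerP 1 (v k a)) => a_ge1; [left | right]; split => // _; lia.
Qed.

Lemma center_neq0 k : exists x, x != 0 /\ center k x.
Proof.
have [y [y0 vy]] := dv_surj (v k) 1; have [a [b [b0 yE]]] := fraction_repr y.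
have a0 : a%:F != 0 by apply: contraNneq y0; rewrite yE => ->; rewrite mul0r.
have b0' : b%:F != 0 by rewrite tofrac_eq0.
exists a%:F; split => //; split => [|_]; first exact: inR_tofrac.
by move: vy; rewrite yE dv_div // => vy; have := dv_ge0 k (inR_tofrac b) b0'; lia.
Qed.

Lemma inR_of_stable t (Q : K -> Prop) : (exists q, q != 0 /\ Q q) ->
  (forall q, Q q -> inR q) -> (forall q, Q q -> Q (t * q)) -> inR t.
Proof.
case=> q [q0 Qq] QR Qt.
have Qtq n : Q (t ^+ n * q).
  by elim: n => [|n IH]; rewrite ?expr0 ?mul1r // exprS -mulrA; apply: Qt.
apply: inR_of_dv_ge0 => t0 i; rewrite leNgt; apply/negP => t_lt0.
pose n := (absz (v i q)).+1.
have := dv_ge0 i (QR _ (Qtq n)) (mulf_neq0 (expf_neq0 n t0) q0).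
rewrite dvM ?expf_neq0 // dvX //; have := dv_ge0 i (QR _ Qq) q0; rewrite /n; nia.
Qed.

Lemma prime_predX (Q : K -> Prop) b n : prime_pred Q -> inR b -> Q (b ^+ n.+1) -> Q b.
Proof.
move=> Qprime bR; elim: n => [|n IH]; first by rewrite expr1.
by rewrite exprS => /(Qprime _ _ bR (inRX _ bR)) [].
Qed.

Lemma center_sub_of_prime y (Q : K -> Prop) : y != 0 -> prime_pred Q -> ~ Q 1 ->
  (forall x, conductor y x -> Q x) -> exists m, v m y < 0 /\ forall x, center m x -> Q x.
Proof.
move=> y0 Qprime nQ1 condQ; apply: NNPP => no_m.
have out_Q m : v m y < 0 -> exists b, center m b /\ ~ Q b.
  move=> ym_lt0; apply: NNPP => in_Q; apply: no_m; exists m; split => // x Px.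
  by apply: NNPP => nQx; apply: in_Q; exists x.
have [l supp_y] := finite_character y0.
suff [B [BR B0 nQB By]] : exists B, [/\ inR B, B != 0, ~ Q B &
    forall m, List.In m l -> v m y < 0 -> - v m y <= v m B].
  apply: nQB; apply: condQ; split => //; apply: inR_of_dv_ge0 => By0 i; rewrite dvM //.
  have := dv_ge0 i BR B0; case: (lerP 0 (v i y)) => yi; first lia.
  by have := By i (supp_y i (ltr0_neq0 yi)) yi; lia.
(* Multiplying by a large power of an element of [center m \ Q] clears the pole of [y] at [m]. *)
elim: l {supp_y} => [|m l [B [BR B0 nQB By]]].
  by exists 1; split => //; [exact: inR1 | exact: oner_neq0].
have [ym_ge0|ym_lt0] := lerP 0 (v m y).
  by exists B; split => // m' [<-|m'l]; [lia | exact: By].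
have [b [[bR b_ge1] nQb]] := out_Q m ym_lt0.
have b0 : b != 0.
  by apply/eqP => b0; apply: nQb; rewrite b0; apply: condQ; split; rewrite ?mul0r; exact: inR0.
exists (B * b ^+ (absz (v m y)).+1); split.
- by apply: inRM => //; apply: inRX.
- by rewrite mulf_neq0 ?expf_neq0.
- by case/(Qprime _ _ BR (inRX _ bR)) => // /(prime_predX Qprime bR).
- move=> m' m'l ym'_lt0; rewrite dvM ?expf_neq0 // dvX //.
  have := dv_ge0 m' bR b0; have := dv_ge0 m' BR B0.
  case: m'l => [<-|m'l]; first by have := b_ge1 b0; nia.
  by have := By _ m'l ym'_lt0; nia.
Qed.

Lemma exists_prime_conductor y : ~ inR y ->
  exists t, [/\ ~ inR t, forall x, conductor y x -> conductor t x & prime_pred (conductor t)].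
Proof.
move=> yR; have [a [b [b0 yE]]] := fraction_repr y.
have b0' : b%:F != 0 by rewrite tofrac_eq0.
have cond_b : conductor y b%:F.
  by split; [exact: inR_tofrac | rewrite yE mulrC mulfVK //; exact: inR_tofrac].
have [l supp_b] := finite_character b0'.
(* Among the [t] outside [R] whose conductor contains that of [y], one with the fewest poles
   (they all lie in the support of [b]) has a prime conductor. *)
pose pole i t := if v i t < 0 then absz (v i t) else 0%N.
pose pole_order t := (\sum_(i <- l) pole i t)%N.
pose admissible t := ~ inR t /\ forall x, conductor y x -> conductor t x.
have : exists n, exists t, admissible t /\ pole_order t = n by exists (pole_order y), y.
case/classic_ex_minn => _ [[t [[tR cond_t] <-]] min_t].
exists t; split => // c d cR dR [_ cdtR].
case: (classic (conductor t c)) => [|not_cond_c]; [by left | right].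
have t0 : t != 0 by apply: contra_not_neq tR => ->; exact: inR0.
have c0 : c != 0.
  by apply: contra_not_neq not_cond_c => ->; split; rewrite ?mul0r; exact: inR0.
have adm_ct : admissible (c * t).
  split => [ctR|x /cond_t [xR xtR]]; first by apply: not_cond_c; split; rewrite // mulrC.
  by split => //; rewrite mulrCA; apply: inRM.
have same_poles : forall i, List.In i l -> pole i (c * t) = pole i t.
  apply: eq_of_sum_le; last exact: min_t (ex_intro _ _ (conj adm_ct erefl)).
  by move=> i; rewrite /pole dvM //; have := dv_ge0 i cR c0; case: ifP; case: ifP; lia.
split => //; apply: inR_of_dv_ge0 => dt0 i.
have d0 : d != 0 by apply: contraNneq dt0 => ->; rewrite mul0r.
rewrite dvM //; have := dv_ge0 i dR d0; case: (lerP 0 (v i t)) => ti; first lia.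
have bt_ge0 : 0 <= v i (b%:F * t) by apply: dv_ge0; [case: (cond_t _ cond_b) | rewrite mulf_neq0].
have il : List.In i l by apply: supp_b; move: bt_ge0; rewrite dvM //; lia.
have := same_poles i il; rewrite /pole dvM //; have := dv_ge0 i cR c0.
have := dv_ge0 i cdtR (mulf_neq0 (mulf_neq0 c0 d0) t0); rewrite !dvM ?mulf_neq0 //.
by case: ifP; case: ifP; lia.
Qed.

Lemma dv_notin_center k s : inR s -> ~ center k s -> s != 0 /\ v k s = 0.
Proof.
move=> sR not_Pk_s; have s0 : s != 0 by apply: contra_not_neq not_Pk_s => ->; exact: center0.
split=> //; have := dv_ge0 k sR s0; case: (lerP 1 (v k s)) => [s_ge1|]; last lia.
by case: not_Pk_s; split.
Qed.

Lemma essential_center_min k j : essential k ->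
  (forall x, center j x -> center k x) -> same_center k j.
Proof.
case=> t [tR center_k] sub_jk p; split=> [Pk_p|]; last exact: sub_jk.
apply: NNPP => not_Pj_p; apply: tR; have [p0 vj_p] := dv_notin_center Pk_p.1 not_Pj_p.
have tR_of_Pk q : center k q -> inR (t * q) by move=> /center_k[_]; rewrite mulrC.
(* [t] stabilises [center j]: for [q] in it, [(t * q) * p] is in it, and [v j p = 0]. *)
apply: (@inR_of_stable t (center j)); [exact: center_neq0 | by move=> q [] |].
move=> q Pj_q; split => [|tq0]; first exact/tR_of_Pk/sub_jk.
have := (centerM Pj_q (tR_of_Pk _ Pk_p)).2.
have -> : q * (t * p) = t * q * p by rewrite mulrCA mulrA.
by rewrite dvM // vj_p addr0; apply; rewrite mulf_neq0.
Qed.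

Lemma essential_of_prime_conductor t : ~ inR t -> prime_pred (conductor t) ->
  exists2 k, essential k & forall x, center k x <-> conductor t x.
Proof.
move=> tR t_prime; have t0 : t != 0 by apply: contra_not_neq tR => ->; exact: inR0.
have [|m [tm_lt0 sub_m]] := center_sub_of_prime t0 t_prime _ (fun x cx => cx).
  by case=> _; rewrite mul1r.
suff center_m x : center m x <-> conductor t x by exists m => //; exists t.
split=> [|[xR xtR]]; first exact: sub_m.
split=> // x0; have := dv_ge0 m xtR (mulf_neq0 x0 t0); rewrite dvM //; lia.
Qed.

Lemma exists_essential_dv_lt0 y : ~ inR y -> exists2 m, essential m & v m y < 0.
Proof.
move=> yR; have y0 : y != 0 by apply: contra_not_neq yR => ->; exact: inR0.
have [t [tR sub_yt t_prime]] := exists_prime_conductor yR.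
have [k ess_k center_k] := essential_of_prime_conductor tR t_prime.
have [|m [ym_lt0 sub_mt]] := center_sub_of_prime y0 t_prime _ sub_yt.
  by case=> _; rewrite mul1r.
have same_km : same_center k m.
  by apply: essential_center_min => // x /sub_mt/center_k.
by exists m => //; exists t; split => // x; rewrite -same_km; exact: center_k.
Qed.

Lemma inR_of_essential x : (x != 0 -> forall k, essential k -> 0 <= v k x) -> inR x.
Proof.
move=> ge0; apply: NNPP => xR; have [m ess_m xm_lt0] := exists_essential_dv_lt0 xR.
have x0 : x != 0 by apply: contra_not_neq xR => ->; exact: inR0.
by have := ge0 x0 m ess_m; rewrite leNgt xm_lt0.
Qed.

Lemma dv_unit (r : R) i : r \is a GRing.unit -> v i r%:F = 0.
Proof.
move=> r_unit; have r0 : r != 0 by apply: contraTneq r_unit => ->; rewrite unitr0.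
have r0' : r%:F != 0 by rewrite tofrac_eq0.
have rV0 : r^-1%:F != 0 by rewrite tofrac_eq0 invr_eq0.
have := dvM (v i) rV0 r0'; rewrite -tofracM mulVr // tofrac1 dv1.
by have := dv_ge0 i (inR_tofrac _) rV0; have := dv_ge0 i (inR_tofrac r) r0'; lia.
Qed.

Lemma nonunit_of_dv_gt0 (r : R) i : 0 < v i r%:F -> r \isn't a GRing.unit.
Proof. by apply: contraTN => /(dv_unit i) ->; rewrite ltxx. Qed.

Lemma dv_le_of_rdvd (c a : R) i : a != 0 -> rdvd c a -> v i c%:F <= v i a%:F.
Proof.
move=> a0 [d aE]; move: a0; rewrite aE mulf_eq0 negb_or => /andP[d0 c0].
rewrite tofracM dvM ?tofrac_eq0 // lerDr; apply: dv_ge0; rewrite ?tofrac_eq0 //.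
exact: inR_tofrac.
Qed.

Lemma same_center_dv_le0 k k' x : essential k -> same_center k k' ->
  x != 0 -> v k x < 0 -> (forall m, same_center k m -> v m x != 0) -> v k' x <= 0.
Proof.
move=> ess_k same_kk' x0 xk_lt0 x_nz; rewrite leNgt; apply/negP => xk'_gt0.
pose e := (1 + x)^-1.
have [x10 _] := dv1D_lt0 x0 xk_lt0.
have e0 : e != 0 by rewrite invr_neq0.
have dv_e m : v m x != 0 -> 0 <= v m e /\ (v m x < 0 -> v m e = - v m x).
  move=> xm0; rewrite /e dvV //; case: (ltgtP (v m x) 0) xm0 => [xm_lt0|xm_gt0|->]//= _.
    by have [_ ->] := dv1D_lt0 x0 xm_lt0; rewrite oppr_ge0 ltW.
  by have [_ ->] := dv1D_gt0 x0 xm_gt0; rewrite oppr0; split => //; lia.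
(* Otherwise [center k] would be the center of a valuation with a pole at [e], whereas [e]
   has no pole at the valuations with the center of [k]. *)
have [s [sR seR not_Pk_s]] : exists s, [/\ inR s, inR (s * e) & ~ center k s].
  apply: NNPP => no_s.
  have sub : forall s, conductor e s -> center k s.
    by move=> s [sR seR]; apply: NNPP => not_Pk_s; apply: no_s; exists s.
  have [m [em_lt0 sub_mk]] := center_sub_of_prime e0 (@center_prime k) (@center1 k) sub.
  have same_km : same_center k m := essential_center_min ess_k sub_mk.
  by have [em_ge0 _] := dv_e m (x_nz m same_km); move: em_lt0; rewrite ltNge em_ge0.
have [s0 sk0] := dv_notin_center sR not_Pk_s.
have [_ sk'0] : s != 0 /\ v k' s = 0 by apply: dv_notin_center; rewrite // -same_kk'.
have se0 : s * e != 0 by rewrite mulf_neq0.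
have [_ /(_ se0)] : center k' (s * e).
  apply/same_kk'; split => // _; rewrite dvM // sk0 add0r.
  by have [_ ->] := dv_e k (x_nz k (fun z => iff_refl _)); lia.
rewrite dvM // sk'0 add0r /e dvV //.
by have [_ ->] := dv1D_gt0 x0 xk'_gt0; rewrite oppr0.
Qed.

Lemma same_center_dv_ge0 k k' y : essential k -> same_center k k' ->
  y != 0 -> 0 <= v k y -> 0 <= v k' y.
Proof.
move=> ess_k same_kk' y0 yk_ge0; rewrite leNgt; apply/negP => yk'_lt0.
have [a [a0 Pk_a]] := center_neq0 k; have aR := Pk_a.1.
have a_ge1 m : same_center k m -> 1 <= v m a by move=> /(_ a) [/(_ Pk_a) [_ ->]].
have [l supp_a] := finite_character a0.
pose L := (absz (v k' a)).+1; pose y1 := y ^+ L * a.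
have y10 : y1 != 0 by rewrite mulf_neq0 ?expf_neq0.
have vy1 m : v m y1 = L%:Z * v m y + v m a by rewrite dvM ?expf_neq0 // dvX.
have y1k_ge1 : 1 <= v k y1 by rewrite vy1; have := a_ge1 k (fun z => iff_refl _); nia.
have y1k'_lt0 : v k' y1 < 0 by rewrite vy1; have := dv_ge0 k' aR a0; rewrite /L; nia.
(* [x] has a pole at [k], a zero at [k'], and is not a unit at the valuations with the
   center of [k]. *)
pose N := (\sum_(i <- l) absz (v i a)).+1; pose x := a / y1 ^+ N.
have x0 : x != 0 by rewrite mulf_neq0 ?invr_neq0 ?expf_neq0.
have vx m : v m x = v m a - N%:Z * v m y1 by rewrite dv_div ?expf_neq0 // dvX.
have a_lt_N m : same_center k m -> v m a < N%:Z.
  move=> same_km; have ml : List.In m l by apply: supp_a; have := a_ge1 m same_km; lia.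
  by have := leq_sum_In (fun i => absz (v i a)) ml; rewrite /N /=; have := a_ge1 m same_km; lia.
have xk_lt0 : v k x < 0 by rewrite vx; have := a_lt_N k (fun z => iff_refl _); nia.
have xk'_gt0 : 0 < v k' x by rewrite vx; have := dv_ge0 k' aR a0; nia.
have : v k' x <= 0.
  apply: (same_center_dv_le0 ess_k same_kk' x0 xk_lt0) => m same_km.
  rewrite vx; have := a_lt_N m same_km; have := a_ge1 m same_km.
  by case: (ltgtP (v m y1) 0) => y1m; nia.
by rewrite leNgt xk'_gt0.
Qed.

Lemma essential_same_center k k' : essential k -> same_center k k' ->
  forall y, y != 0 -> v k y = v k' y.
Proof.
move=> ess_k same_kk'; have ess_k' : essential k'.
  by case: ess_k => t [tR center_k]; exists t; split => // x; rewrite -same_kk'.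
apply: dv_eq_of_ring => y y0; apply/idP/idP; first exact: same_center_dv_ge0.
by apply: same_center_dv_ge0 => // x; rewrite same_kk'.
Qed.


Definition dv_equiv k k' := forall y : K, y != 0 -> v k y = v k' y.

Lemma dv_equiv_sym k k' : dv_equiv k k' -> dv_equiv k' k.
Proof. by move=> kk' y y0; rewrite kk'. Qed.

Lemma dv_equiv_trans k1 k2 k3 : dv_equiv k1 k2 -> dv_equiv k2 k3 -> dv_equiv k1 k3.
Proof. by move=> k12 k23 y y0; rewrite k12 // k23. Qed.

Lemma essential_equiv k k' : essential k -> dv_equiv k k' -> essential k'.
Proof.
case=> t [tR center_k] kk'; exists t; split => // x; rewrite -center_k.
by split; case=> xR x_ge1; split => // x0; [rewrite kk' | rewrite -kk'] => //; exact: x_ge1.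
Qed.

Lemma essential_separation i j : essential i -> essential j -> ~ dv_equiv i j ->
  exists r, [/\ inR r, r != 0, v i r = 0 & 1 <= v j r].
Proof.
move=> ess_i ess_j not_ij; apply: NNPP => no_r; apply: not_ij.
have sub_ji x : center j x -> center i x.
  move=> Pj_x; apply: NNPP => not_Pi_x; apply: no_r; exists x.
  have [x0 xi0] := dv_notin_center Pj_x.1 not_Pi_x.
  by split => //; [case: Pj_x | case: Pj_x => _; apply].
exact: essential_same_center ess_i (essential_center_min ess_i sub_ji).
Qed.


(** * Torsion primes and the class group *)

Definition torsion_prime k := exists N : nat, (0 < N)%N /\ exists x : K,
  [/\ x != 0, v k x = N%:Z & forall k', essential k' -> ~ dv_equiv k' k -> v k' x = 0].

Lemma exists_principal_multiple (L : seq I) (delta : I -> int) :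
  (forall k, essential k -> torsion_prime k) ->
  (forall k k', dv_equiv k k' -> delta k = delta k') ->
  (forall k, essential k -> delta k != 0 -> List.In k L) ->
  exists N : nat, (0 < N)%N /\
    exists x : K, x != 0 /\ forall k, essential k -> v k x = N%:Z * delta k.
Proof.
move=> tors; elim: L delta => [|k1 L IH] delta delta_equiv supp.
  exists 1%N; split => //; exists 1; split => [|k ess_k]; first exact: oner_neq0.
  rewrite dv1; case: (eqVneq (delta k) 0) => [->|dk0]; first by rewrite mulr0.
  by case: (supp k ess_k dk0).
pose delta' k := if excluded_middle_informative (dv_equiv k k1) then 0 else delta k.
have [N' [N'0 [x' [x'0 vx']]]] : exists N : nat, (0 < N)%N /\
    exists x : K, x != 0 /\ forall k, essential k -> v k x = N%:Z * delta' k.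
  apply: IH => [k k' kk'|k ess_k]; rewrite /delta'.
    case: excluded_middle_informative => [k_k1|not_k_k1];
      case: excluded_middle_informative => [k'_k1|not_k'_k1] //.
    - by case: not_k'_k1; apply: dv_equiv_trans (dv_equiv_sym kk') k_k1.
    - by case: not_k_k1; apply: dv_equiv_trans kk' k'_k1.
    - exact: delta_equiv.
  case: excluded_middle_informative => // not_k_k1 dk0.
  case: (supp k ess_k dk0) => [k1k|//].
  by suff /not_k_k1 : dv_equiv k k1 by []; rewrite k1k.
have [ess_k1|not_ess_k1] := classic (essential k1); last first.
  exists N'; split => //; exists x'; split => // k ess_k; rewrite vx' // /delta'.
  case: excluded_middle_informative => // k_k1.
  by case: not_ess_k1; apply: essential_equiv ess_k k_k1.
have [N1 [N10 [x1 [x10 vx1 supp_x1]]]] := tors k1 ess_k1.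
exists (N1 * N')%N; split; first by rewrite muln_gt0 N10.
exists (x' ^+ N1 * x1 ^ (delta k1 * N'%:Z)).
split=> [|k ess_k]; first by rewrite mulf_neq0 ?expf_neq0 ?expfz_neq0.
rewrite dvM ?expf_neq0 ?expfz_neq0 // dvX // dvXz // vx' // /delta'.
case: excluded_middle_informative => [k_k1|not_k_k1].
  by rewrite (k_k1 x1 x10) vx1 (delta_equiv _ _ k_k1) PoszM; ring.
by rewrite (supp_x1 k ess_k not_k_k1) PoszM; ring.
Qed.

Lemma fractional_ideal_dv_min (F : K -> Prop) : fractional_ideal F ->
  exists delta : I -> int,
    [/\ forall k, exists f, [/\ F f, f != 0 & v k f = delta k],
        forall k f, F f -> f != 0 -> delta k <= v k f &
        exists l : seq I, forall k, delta k != 0 -> List.In k l].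
Proof.
case=> [_ [_ [_ [[a [Fa a0]] [d [d0 dF]]]]]].
have d0' : d%:F != 0 by rewrite tofrac_eq0.
have low k f : F f -> f != 0 -> - v k d%:F <= v k f.
  by move=> Ff f_neq0; have := dv_ge0 k (dF _ Ff) (mulf_neq0 d0' f_neq0); rewrite dvM //; lia.
have min_k k : exists dk, (exists f, [/\ F f, f != 0 & v k f = dk]) /\
    forall f, F f -> f != 0 -> dk <= v k f.
  have : exists n, exists f, [/\ F f, f != 0 & v k f + v k d%:F = n%:Z].
    by exists (absz (v k a + v k d%:F)), a; split => //; have := low k a Fa a0; lia.
  case/classic_ex_minn => n [[f [Ff f_neq0 vf]] min_n].
  exists (n%:Z - v k d%:F); split => [|g Fg g0]; first by exists f; split => //; lia.
  have lowg := low k g Fg g0.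
  suff /min_n : exists f,
    [/\ F f, f != 0 & v k f + v k d%:F = (absz (v k g + v k d%:F))%:Z] by lia.
  by exists g; split => //; lia.
have [delta delta_min] := ClassicalEpsilon.choice _ min_k.
exists delta; split => [k|k|]; try by case: (delta_min k).
have [l0 supp_a] := finite_character a0; have [l1 supp_d] := finite_character d0'.
exists (l0 ++ l1) => k dk0; apply/List.in_or_app.
have [ak0|] := eqVneq (v k a) 0; last by left; apply: supp_a.
have [dk_0|] := eqVneq (v k d%:F) 0; last by right; apply: supp_d.
have [[f [Ff f_neq0 vf]] min_f] := delta_min k.
by move: dk0 (min_f _ Fa a0) (low k f Ff f_neq0); rewrite vf ak0 dk_0; lia.
Qed.

Lemma vclos_setpow_principal (F : K -> Prop) :
  (forall k, essential k -> torsion_prime k) -> fractional_ideal F ->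
  exists n, (0 < n)%N /\ exists x : K, x != 0 /\
    forall y, vclos (setpow F n) y <-> principal_frac x y.
Proof.
move=> tors F_frac.
have [delta [delta_attained delta_min [l supp]]] := fractional_ideal_dv_min F_frac.
have delta_equiv k k' : dv_equiv k k' -> delta k = delta k'.
  move=> kk'; have [f [Ff f0 vf]] := delta_attained k; have [g [Fg g0 vg]] := delta_attained k'.
  have := delta_min k _ Fg g0; have := delta_min k' _ Ff f0.
  by rewrite (kk' _ g0) -(kk' _ f0) vf vg; lia.
have [N [N0 [x [x0 vx]]]] := exists_principal_multiple tors delta_equiv (fun k _ => supp k).
exists N; split => //; exists x; split => // y.
have pow_ge s : setpow F N s -> s != 0 -> forall k, N%:Z * delta k <= v k s.
  case=> f [Ff ->] /prodf_neq0 f0 k; rewrite dv_prod; last exact/prodf_neq0.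
  have -> : N%:Z * delta k = \sum_(i < N) delta k by rewrite sumr_const card_ord -mulr_natl natz.
  by apply: ler_sum => i _; apply: delta_min; rewrite ?f0.
split=> [y_cl|[r ->] w w_inv].
  suff [r yxR] : inR (y * x^-1) by exists r; rewrite -yxR mulfVK.
  apply: y_cl => s Ss; apply: inR_of_essential => xs0 k ess_k.
  have s0 : s != 0 by apply: contraNneq xs0 => ->; rewrite mulr0.
  by rewrite dvM ?invr_neq0 // dvV // vx //; have := pow_ge s Ss s0 k; lia.
apply: inR_of_essential => rxw0 k ess_k.
have r0 : r%:F != 0 by apply: contraNneq rxw0 => ->; rewrite !mul0r.
have w0 : w != 0 by apply: contraNneq rxw0 => ->; rewrite mulr0.
have [f [Ff f0 vf]] := delta_attained k.
have Sf : setpow F N (f ^+ N) by exists (fun=> f); split => //; rewrite prodr_const card_ord.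
have := dv_ge0 k (w_inv _ Sf) (mulf_neq0 w0 (expf_neq0 _ f0)).
rewrite !dvM ?mulf_neq0 ?expf_neq0 // dvX // vf vx //.
by have := dv_ge0 k (inR_tofrac r) r0; lia.
Qed.


(** * The Z-property *)

Lemma exists_essential_family p0 (l : seq I) : essential p0 ->
  exists n (t : nat -> I), [/\ (0 < n)%N, t 0%N = p0,
    forall j, (j < n)%N -> essential (t j),
    forall i j, (i < n)%N -> (j < n)%N -> i != j -> ~ dv_equiv (t i) (t j) &
    forall k, essential k -> List.In k l -> exists2 j, (j < n)%N & dv_equiv k (t j)].
Proof.
move=> ess_p0; elim: l => [|k l [n [t [n_gt0 t0 t_ess t_ineq cover]]]].
  exists 1%N, (fun _ => p0); split => // i j.
  by rewrite !ltnS !leqn0 => /eqP -> /eqP ->; rewrite eqxx.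
have [[ess_k new_k]|old_k] :=
  classic (essential k /\ ~ exists2 j, (j < n)%N & dv_equiv k (t j)); last first.
  exists n, t; split => // k' ess_k' [k_k'|]; last exact: cover.
  by subst k'; apply: NNPP => not_cov; apply: old_k.
exists n.+1, (fun j => if j == n then k else t j); split => //.
- by rewrite eq_sym (negbTE (lt0n_neq0 n_gt0)).
- move=> j j_le_n; have [//|jn] := eqVneq j n.
  by apply: t_ess; rewrite ltn_neqAle jn -ltnS.
- move=> i j; rewrite !ltnS => i_le_n j_le_n ij.
  have [ein|nin] := eqVneq i n; have [ejn|njn] := eqVneq j n.
  + by move: ij; rewrite ein ejn eqxx.
  + by move=> kt; apply: new_k; exists j; [rewrite ltn_neqAle njn | exact: kt].
  + by move=> tk; apply: new_k; exists i; [rewrite ltn_neqAle nin | exact: dv_equiv_sym].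
  + by apply: t_ineq; rewrite // ltn_neqAle ?nin ?njn.
- move=> k' ess_k' [<-|k'l]; first by exists n; rewrite ?eqxx.
  have [j j_lt_n k't] := cover k' ess_k' k'l.
  by exists j; [apply: ltnW | rewrite (ltn_eqF j_lt_n)].
Qed.


Section EssentialFamily.
Variables (n : nat) (t : nat -> I).
Hypothesis t_essential : forall j, (j < n)%N -> essential (t j).
Hypothesis t_inequiv :
  forall i j, (i < n)%N -> (j < n)%N -> i != j -> ~ dv_equiv (t i) (t j).

Lemma exists_unit_at i : (i < n)%N -> exists u, [/\ inR u, u != 0, v (t i) u = 0 &
  forall j, (j < n)%N -> j != i -> 1 <= v (t j) u].
Proof.
move=> i_lt_n.
have r_ex j : exists r : K, (j < n)%N -> j != i ->
    [/\ inR r, r != 0, v (t i) r = 0 & 1 <= v (t j) r].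
  have [[j_lt_n ji]|out] := classic ((j < n)%N /\ j != i); last first.
    by exists 1 => j_lt_n ji; case: out.
  have [|r [rR r0 ri rj]] := essential_separation (t_essential i_lt_n) (t_essential j_lt_n).
    by apply: t_inequiv; rewrite // eq_sym.
  by exists r.
have [r r_sep] := ClassicalEpsilon.choice _ r_ex.
have r_spec j : j \in iota 0 n -> j != i ->
    [/\ inR (r j), r j != 0, v (t i) (r j) = 0 & 1 <= v (t j) (r j)].
  by rewrite mem_iota => /andP[_ j_lt_n]; apply: r_sep.
have u0 : \prod_(j <- iota 0 n | j != i) r j != 0.
  by rewrite prodf_seq_neq0; apply/allP => j /r_spec rj; apply/implyP => /rj[].
exists (\prod_(j <- iota 0 n | j != i) r j); split => //.
- by rewrite big_seq_cond; apply: inR_prod => j /andP[/r_spec rj /rj[]].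
- by rewrite dv_prod // big_seq_cond big1 // => j /andP[/r_spec rj /rj[]].
move=> j j_lt_n ji; rewrite dv_prod //; have [_ _ _ rj_ge1] := r_sep j j_lt_n ji.
apply: le_trans rj_ge1 _; apply: (ler_term_sum (F := fun k => v (t j) (r k))) => //.
- exact: iota_uniq.
- by rewrite mem_iota.
- by move=> k /r_spec rk /rk[rkR rk0 _ _]; apply: dv_ge0.
Qed.

Lemma approximation (S : pred nat) (g : nat -> K) (M : nat) :
  (forall j, (j < n)%N -> S j -> [/\ inR (g j), g j != 0 & v (t j) (g j) < M%:Z]) ->
  (exists2 j, (j < n)%N & S j) ->
  exists d, [/\ inR d, d != 0,
    forall j, (j < n)%N -> S j -> v (t j) d = v (t j) (g j) &
    forall j, (j < n)%N -> ~~ S j -> M%:Z <= v (t j) d].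
Proof.
move=> g_spec [j0 j0_lt_n Sj0].
have u_ex i : exists u, (i < n)%N -> [/\ inR u, u != 0, v (t i) u = 0 &
    forall j, (j < n)%N -> j != i -> 1 <= v (t j) u].
  have [i_lt_n|_] := ltnP i n; last by exists 1.
  by have [u u_spec] := exists_unit_at i_lt_n; exists u.
have [u u_spec] := ClassicalEpsilon.choice _ u_ex.
pose s := [seq i <- iota 0 n | S i].
have mem_s i : (i \in s) = (i < n)%N && S i by rewrite mem_filter mem_iota andbC.
pose term i := u i ^+ M * g i.
have term_spec i : i \in s -> [/\ inR (term i), term i != 0, v (t i) (term i) = v (t i) (g i) &
    forall j, (j < n)%N -> j != i -> M%:Z <= v (t j) (term i)].
  rewrite mem_s => /andP[i_lt_n Si]; have [uR u0 ui uj] := u_spec i i_lt_n.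
  have [gR g0 _] := g_spec i i_lt_n Si.
  split; first by apply: inRM => //; apply: inRX.
  - by rewrite mulf_neq0 ?expf_neq0.
  - by rewrite dvM ?expf_neq0 // dvX // ui mulr0 add0r.
  move=> j j_lt_n ji; rewrite dvM ?expf_neq0 // dvX //.
  by have := uj j j_lt_n ji; have := dv_ge0 (t j) gR g0; nia.
pose d := \sum_(i <- s) term i.
have d_at j : j \in s -> d != 0 /\ v (t j) d = v (t j) (g j).
  move=> js; have [_ termj0 termj _] := term_spec j js.
  rewrite -termj; apply: dv_sum_dominant => //; first exact/filter_uniq/iota_uniq.
  move=> i i_s ij _; have [_ _ _ term_ge] := term_spec i i_s.
  have /andP[j_lt_n Sj] : (j < n)%N && S j by rewrite -mem_s.
  have ji : j != i by rewrite eq_sym.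
  by rewrite termj; have [_ _] := g_spec j j_lt_n Sj; have := term_ge j j_lt_n ji; lia.
have j0s : j0 \in s by rewrite mem_s j0_lt_n.
exists d; split.
- by rewrite /d big_seq; apply: inR_sum => i /term_spec[].
- by have [] := d_at j0 j0s.
- by move=> j j_lt_n Sj; have [] := d_at j; rewrite // mem_s j_lt_n.
move=> j j_lt_n nSj; rewrite /d big_seq; apply: dv_sum_ge => [i i_s _|]; last first.
  by rewrite -big_seq; have [] := d_at j0 j0s.
have [_ _ _ term_ge] := term_spec i i_s; apply: term_ge => //.
by apply: contraNneq nSj => ->; move: i_s; rewrite mem_s => /andP[].
Qed.

Definition supported (x : K) :=
  forall k, essential k -> (forall j, (j < n)%N -> ~ dv_equiv k (t j)) -> v k x = 0.

Definition orthogonal (psi : nat -> rat) := forall x, x != 0 -> supported x ->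
  \sum_(j <- iota 0 n) psi j * (v (t j) x)%:~R = 0.

Lemma exists_orthogonal : (0 < n)%N -> ~ torsion_prime (t 0) ->
  exists2 psi, psi 0%N != 0 & orthogonal psi.
Proof.
move=> n_gt0 not_tors.
pose L u := exists x, [/\ x != 0, forall j, (j < n)%N -> u j = v (t j) x & supported x].
suff [psi [psi0 psi_L]] : exists psi : nat -> rat, psi 0%N != 0 /\
    forall u, L u -> \sum_(j <- iota 0 n) psi j * (u j)%:~R = 0.
  by exists psi => // x x0 x_supp; apply: psi_L; exists x.
apply: exists_annihilating_form; first exact: iota_uniq; first by rewrite mem_iota.
- move=> u u' [x [x0 ux x_supp]] [x' [x'0 ux' x'_supp]]; exists (x / x').
  split=> [|j j_lt_n|k ess_k k_out]; first by rewrite mulf_neq0 ?invr_neq0.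
    by rewrite dv_div // ux // ux'.
  by rewrite dv_div // x_supp // x'_supp // subr0.
- move=> u z [x [x0 ux x_supp]]; exists (x ^ z).
  split=> [|j j_lt_n|k ess_k k_out]; first exact: expfz_neq0.
    by rewrite dvXz // ux.
  by rewrite dvXz // x_supp // mulr0.
(* A lattice vector supported at [0] alone would make a multiple of [t 0] principal. *)
move=> u [x [x0 ux x_supp]] u_vanish; apply: NNPP => u00; apply: not_tors.
exists (absz (u 0%N)); split; first by rewrite absz_gt0; apply/eqP.
exists (x ^ sgz (u 0%N)); split; first exact: expfz_neq0.
  by rewrite dvXz // -ux // abszEsg.
move=> k ess_k k_t0; rewrite dvXz //.
have [[j j_lt_n k_tj]|k_out] := classic (exists2 j, (j < n)%N & dv_equiv k (t j)).
  have j0 : j != 0%N by apply: contra_not_neq k_t0 => j0; rewrite -j0.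
  by rewrite (k_tj x x0) -ux // (u_vanish j) ?mulr0 // mem_iota.
by rewrite x_supp ?mulr0 // => j j_lt_n k_tj; apply: k_out; exists j.
Qed.

Lemma exists_minimal (psi : nat -> rat) w0 : w0 != 0 -> inR w0 -> supported w0 ->
  exists w, [/\ w != 0, inR w, supported w,
    forall j, (j < n)%N -> psi j != 0 -> v (t j) w = v (t j) w0 &
    forall z, inR z -> z != 0 -> inR (w / z) ->
      (forall j, (j < n)%N -> psi j != 0 -> v (t j) z = 0) -> inR z^-1].
Proof.
move=> w00 w0R w0_supp.
pose admissible w := [/\ w != 0, inR w, supported w &
  forall j, (j < n)%N -> psi j != 0 -> v (t j) w = v (t j) w0].
pose weight w := (\sum_(j <- iota 0 n) absz (v (t j) w))%N.
have : exists m, exists2 w, admissible w & weight w = m by exists (weight w0), w0.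
case/classic_ex_minn => _ [[w [w0' wR w_supp w_val] <-] min_w].
exists w; split => // z zR z0 wzR z_val; apply: NNPP => zVR.
have [k ess_k] := exists_essential_dv_lt0 zVR; rewrite dvV // oppr_lt0 => zk_gt0.
have wz0 : w / z != 0 by rewrite mulf_neq0 ?invr_neq0.
have le_zw k' : 0 <= v k' z <= v k' w.
  by have := dv_ge0 k' wzR wz0; rewrite dv_div // subr_ge0 => ->; rewrite dv_ge0.
have [j j_lt_n k_tj] : exists2 j, (j < n)%N & dv_equiv k (t j).
  apply: NNPP => k_out; have := le_zw k; rewrite w_supp // => [|j j_lt_n k_tj]; first lia.
  by apply: k_out; exists j.
suff : (weight (w / z) < weight w)%N.
  rewrite ltnNge min_w //; exists (w / z) => //; split => // [k' ess_k' k'_out|j' j'_lt_n psij'].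
    by have := le_zw k'; rewrite dv_div // w_supp //; lia.
  by rewrite dv_div // z_val // subr0; apply: w_val.
apply: (@ltn_sum_seq _ _ _ _ j); rewrite ?iota_uniq ?mem_iota //.
  by move=> i _; rewrite dv_div //; have := le_zw (t i); lia.
by rewrite dv_div // -(k_tj z z0) -(k_tj w w0'); have := le_zw k; lia.
Qed.


Section MinimalElement.
Variables (psi : nat -> rat) (w : K).
Hypotheses (w0 : w != 0) (wR : inR w) (w_supp : supported w).
Hypothesis w_min : forall z, inR z -> z != 0 -> inR (w / z) ->
  (forall j, (j < n)%N -> psi j != 0 -> v (t j) z = 0) -> inR z^-1.

Definition sign_approximant (phi : nat -> rat) (M : nat) (d : K) := [/\ inR d, d != 0,
  forall j, (j < n)%N -> phi j < 0 -> v (t j) d = 0,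
  forall j, (j < n)%N -> phi j = 0 -> v (t j) d = v (t j) w &
  forall j, (j < n)%N -> 0 < phi j -> M%:Z <= v (t j) d].

Lemma exists_sign_approximant (phi : nat -> rat) (M : nat) :
  (forall j, (j < n)%N -> v (t j) w < M%:Z) -> (exists2 j, (j < n)%N & phi j < 0) ->
  exists d, sign_approximant phi M d.
Proof.
move=> w_lt_M [j0 j0_lt_n phij0].
pose g j := if phi j == 0 then w else 1.
have g_spec j : (j < n)%N -> phi j <= 0 -> [/\ inR (g j), g j != 0 & v (t j) (g j) < M%:Z].
  move=> j_lt_n _; rewrite /g; case: ifP => _; first by split => //; apply: w_lt_M.
  split; [exact: inR1 | exact: oner_neq0 | rewrite dv1].
  by have := w_lt_M j j_lt_n; have := dv_ge0 (t j) wR w0; lia.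
have [|d [dR d0 d_S d_nS]] := approximation g_spec; first by exists j0 => //; apply: ltW.
exists d; split => // j j_lt_n phij.
- by rewrite d_S ?(ltW phij) // /g lt_eqF ?dv1.
- by move: (d_S j j_lt_n); rewrite /g phij eqxx lexx; apply.
- by apply: d_nS => //; rewrite leNgt phij.
Qed.

Lemma divisor_unit (phi : nat -> rat) M d z : orthogonal phi ->
  (forall j, (j < n)%N -> psi j != 0 -> phi j != 0) -> sign_approximant phi M d ->
  inR z -> z != 0 -> (forall k, v k z <= 2 * v k w) -> (forall k, v k z <= v k d) ->
  inR z^-1.
Proof.
move=> phi_orth phi_psi [_ _ d_neg d_zero _] zR z0 z_w2 z_d.
have z_supp : supported z.
  by move=> k ess_k k_out; have := z_w2 k; have := dv_ge0 k zR z0; rewrite w_supp //; lia.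
(* Orthogonality forces [z] to be a unit wherever [phi] does not vanish. *)
have z_phi j : (j < n)%N -> phi j != 0 -> v (t j) z = 0.
  have term_ge0 i : i \in iota 0 n -> 0 <= phi i * (v (t i) z)%:~R.
    rewrite mem_iota => /andP[_ i_lt_n]; case: (ltgtP (phi i) 0) => [phi_lt0|phi_gt0|->].
    - have zi0 : v (t i) z = 0.
        by have := z_d (t i); have := dv_ge0 (t i) zR z0; rewrite d_neg //; lia.
      by rewrite zi0 mulr0z mulr0.
    - by apply: mulr_ge0; [exact: ltW | rewrite ler0z; exact: dv_ge0].
    - by rewrite mul0r.
  move=> j_lt_n phij; move/eqP: (phi_orth z z0 z_supp); rewrite big_seq psumr_eq0 //.
  move/allP/(_ j); rewrite mem_iota j_lt_n => /(_ isT) /=.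
  by rewrite mulf_eq0 (negbTE phij) intr_eq0 => /eqP.
apply: w_min => // [|j j_lt_n psij]; last by apply: z_phi; last apply: phi_psi.
apply: inR_of_essential => _ k ess_k; rewrite dv_div //.
have [[j j_lt_n k_tj]|k_out] := classic (exists2 j, (j < n)%N & dv_equiv k (t j)); last first.
  by rewrite z_supp ?subr0 ?dv_ge0 // => j j_lt_n k_tj; apply: k_out; exists j.
rewrite (k_tj z z0) (k_tj w w0) subr_ge0; have [phij0|phij] := eqVneq (phi j) 0.
  by rewrite -(d_zero j) //; apply: z_d.
by rewrite z_phi // dv_ge0.
Qed.

Lemma no_common_divisor (phi : nat -> rat) M (wr dr : R) : wr%:F = w -> orthogonal phi ->
  (forall j, (j < n)%N -> psi j != 0 -> phi j != 0) -> sign_approximant phi M dr%:F ->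
  ~ common_nonunit_divisor (wr * wr) dr.
Proof.
move=> wE phi_orth phi_psi d_approx [z [z_nonunit [z_ww z_d]]].
have ww0 : wr * wr != 0 by rewrite mulf_neq0 // -tofrac_eq0 wE.
have z0 : z != 0 by apply: contraNneq ww0 => z0; case: z_ww => q ->; rewrite z0 mulr0.
have dr0 : dr != 0 by rewrite -tofrac_eq0; case: d_approx.
move/negP: z_nonunit; apply; apply: (unit_of_inR_inv z0).
apply: (divisor_unit phi_orth phi_psi d_approx); rewrite ?tofrac_eq0 //.
- exact: inR_tofrac.
- by move=> k; have := dv_le_of_rdvd k ww0 z_ww; rewrite tofracM wE dvM //; lia.
- by move=> k; apply: dv_le_of_rdvd.
Qed.

(* [d] and [e] compensate each other's valuations, so [d e / w^2] lies in [R]. *)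
Lemma sign_approximant_quotient M d e : (forall j, (j < n)%N -> 2 * v (t j) w < M%:Z) ->
  sign_approximant psi M d -> sign_approximant (fun j => - psi j) M e ->
  inR (d * e / (w * w)) /\ forall j, (j < n)%N -> psi j != 0 -> 0 < v (t j) (d * e / (w * w)).
Proof.
move=> w_lt_M [dR d0 d_neg d_zero d_pos] [eR e0 e_neg e_zero e_pos].
have vc k : v k (d * e / (w * w)) = v k d + v k e - 2 * v k w.
  by rewrite dv_div ?mulf_neq0 // !dvM //; lia.
have vc_gt0 j : (j < n)%N -> psi j != 0 -> 0 < v (t j) (d * e / (w * w)).
  move=> j_lt_n; rewrite vc; have := w_lt_M j j_lt_n; have := dv_ge0 (t j) wR w0.
  have := dv_ge0 (t j) dR d0; have := dv_ge0 (t j) eR e0.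
  case: (ltgtP (psi j) 0) => // psij.
    by rewrite d_neg //; have := e_pos j j_lt_n; rewrite oppr_gt0 => /(_ psij); lia.
  by rewrite e_neg ?oppr_lt0 //; have := d_pos j j_lt_n psij; lia.
split=> //; apply: inR_of_essential => _ k ess_k.
have [[j j_lt_n k_tj]|k_out] := classic (exists2 j, (j < n)%N & dv_equiv k (t j)).
  rewrite (k_tj _ (mulf_neq0 (mulf_neq0 d0 e0) (invr_neq0 (mulf_neq0 w0 w0)))).
  have [psij|psij] := eqVneq (psi j) 0; last exact/ltW/vc_gt0.
  by rewrite vc d_zero // e_zero ?psij ?oppr0 //; lia.
have wk0 : v k w = 0 by apply: w_supp => // j j_lt_n k_tj; apply: k_out; exists j.
by rewrite vc wk0; have := dv_ge0 k dR d0; have := dv_ge0 k eR e0; lia.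
Qed.

Lemma Z_contradiction jp jm : Z_property R -> orthogonal psi ->
  (jp < n)%N -> 0 < psi jp -> 0 < v (t jp) w ->
  (jm < n)%N -> psi jm < 0 -> 0 < v (t jm) w -> False.
Proof.
move=> Z psi_orth jp_lt_n psi_jp w_jp jm_lt_n psi_jm w_jm.
pose m := \max_(j <- iota 0 n) absz (v (t j) w); pose M := (2 * m).+1.
have w_lt_M j : (j < n)%N -> 2 * v (t j) w < M%:Z.
  move=> j_lt_n; have : (absz (v (t j) w) <= m)%N by apply: leq_bigmax_seq; rewrite ?mem_iota.
  by have := dv_ge0 (t j) wR w0; rewrite /M; lia.
have w_lt_M' j : (j < n)%N -> v (t j) w < M%:Z.
  by move=> /w_lt_M; have := dv_ge0 (t j) wR w0; lia.
have psiN_jp : - psi jp < 0 by rewrite oppr_lt0.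
have [d d_approx] := exists_sign_approximant w_lt_M' (ex_intro2 _ _ jm jm_lt_n psi_jm).
have [e e_approx] := exists_sign_approximant (phi := fun j => - psi j) w_lt_M'
  (ex_intro2 _ _ jp jp_lt_n psiN_jp).
have [cR c_gt0] := sign_approximant_quotient w_lt_M d_approx e_approx.
have [wr wE] := wR; have [cr cE] := cR.
have [[dr dE] d0 _ _ d_pos] := d_approx; have [[er eE] e0 _ _ e_pos] := e_approx.
have nonunit_at (r : R) x j : x = r%:F -> x != 0 -> 0 < v (t j) x -> nonzero_nonunit r.
  by move=> -> x0 xj; split; [rewrite -tofrac_eq0 | exact: nonunit_of_dv_gt0 xj].
have nn_w := nonunit_at _ _ _ wE w0 w_jp.
have nn_c : nonzero_nonunit cr.
  apply: (nonunit_at _ _ jp cE); last by apply: c_gt0; rewrite ?gt_eqF.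
  by rewrite !mulf_neq0 ?invr_neq0 ?mulf_neq0.
have nn_d : nonzero_nonunit dr.
  by apply: (nonunit_at _ _ jp dE d0); have := d_pos jp jp_lt_n psi_jp; lia.
have nn_e : nonzero_nonunit er.
  apply: (nonunit_at _ _ jm eE e0); have := e_pos jm jm_lt_n; rewrite oppr_gt0.
  by move=> /(_ psi_jm); lia.
have wwc_de : wr * wr * cr = dr * er.
  by apply/eqP; rewrite -tofrac_eq !tofracM -wE -cE -dE -eE; apply/eqP; field.
have psiN_orth : orthogonal (fun j => - psi j).
  move=> x x0 x_supp; rewrite (eq_bigr (fun j => - (psi j * (v (t j) x)%:~R))).
    by rewrite sumrN psi_orth // oppr0.
  by move=> j _; rewrite mulNr.
have [] := Z _ _ _ _ _ nn_w nn_w nn_c nn_d nn_e wwc_de.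
  by apply: (no_common_divisor (M := M) (esym wE) psi_orth (fun _ _ psij => psij)); rewrite -dE.
apply: (no_common_divisor (M := M) (esym wE) psiN_orth) => [j _|]; first by rewrite oppr_eq0.
by rewrite -eE; exact: e_approx.
Qed.

End MinimalElement.


End EssentialFamily.

Lemma torsion_of_Z_property p0 : Z_property R -> essential p0 -> torsion_prime p0.
Proof.
move=> Z ess_p0; apply: NNPP => not_tors.
have [w0 [w00 [w0R w0_ge1]]] := center_neq0 p0.
have [l supp_w0] := finite_character w00.
have [n [t [n_gt0 t0 t_ess t_ineq cover]]] := exists_essential_family l ess_p0.
have not_tors0 : ~ torsion_prime (t 0%N) by rewrite t0.
have [psi psi0 psi_orth] := exists_orthogonal n_gt0 not_tors0.
have w0_supp : supported n t w0.
  move=> k ess_k k_out; apply/eqP; apply: contraT => wk0.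
  by have [j j_lt_n k_tj] := cover k ess_k (supp_w0 k wk0); case: (k_out j).
have [w [w0' wR w_supp w_val w_min]] := exists_minimal psi w00 w0R w0_supp.
have zero_in : 0%N \in iota 0 n by rewrite mem_iota.
have w_t0 : 0 < v (t 0%N) w by rewrite w_val // t0; apply: w0_ge1.
have [[jp jp_in [psi_jp w_jp]] [jm jm_in [psi_jm w_jm]]] :=
  sum_eq0_signs zero_in (fun j _ => dv_ge0 (t j) wR w0') psi0 w_t0 (psi_orth w w0' w_supp).
move: jp_in jm_in; rewrite !mem_iota => /andP[_ jp_lt_n] /andP[_ jm_lt_n].
exact: (Z_contradiction t_ess t_ineq w0' wR w_supp w_min Z psi_orth jp_lt_n psi_jp w_jp
  jm_lt_n psi_jm w_jm).
Qed.

End KrullDomain.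

Theorem mainTheorem6 (R : idomainType) :
  Krull_domain R -> Z_property R -> class_group_torsion R.
Proof.
case=> I [v [inR_iff finite_character]] Z F [F_frac _].
apply: (vclos_setpow_principal inR_iff finite_character) => // k ess_k.
exact: (torsion_of_Z_property inR_iff finite_character Z ess_k).
Qed.
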